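(* Let $K\subseteq\mathbb{R}^d$ be a proper locally anti-blocking body and $i\in\{1,\dots,d\}$. Then $$\mu_i(K)=\max\Big\{\mu(K\cap L_I): I\subseteq\{1,\dots,d\},\ |I|=i\Big\},$$ where $L_I=\operatorname{span}_{\mathbb{R}}\{e_k:k\in I\}$ and $\mu(K\cap L_I)$ is the covering radius of $K\cap L_I$ with respect to $\mathbb{Z}^d\cap L_I$ inside $L_I$.
   Context: A convex body is a full-dimensional compact convex set. For $I\subseteq\{1,\dots,d\}$, $L_I$ is the coordinate subspace spanned by the standard basis vectors $e_k$, $k\in I$, and $\pi_{L_I}$ the orthogonal projection onto it. A convex body $K\subseteq\mathbb{R}^d$ is locally anti-blocking if $K\cap L_I=\pi_{L_I}(K)$ for every $I\subseteq\{1,\dots,d\}$; it is proper if it contains the origin in its interior. For $i\in\{1,\dots,d\}$, $\mu_i(K)=\min\{\mu\ge0:(\mu K+\mathbb{Z}^d)\cap U\ne\emptyset$ for every $(d-i)$-dimensional affine subspace $U\subseteq\mathbb{R}^d\}$. For a convex body $C$ in a subspace $E$ with lattice $\Gamma\subseteq E$, the covering radius is $\min\{\mu\ge0:\mu C+\Gamma=E\}$. *)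

From HB Require Import structures.
From mathcomp Require Import all_boot all_order all_algebra.
From mathcomp Require Import all_classical all_reals all_analysis.
Set Implicit Arguments. Unset Strict Implicit. Unset Printing Implicit Defensive.
Import Order.TTheory GRing.Theory Num.Theory.
Import numFieldNormedType.Exports.
Local Open Scope classical_set_scope.
Local Open Scope ring_scope.

Section Defs.
Variables (R : realType) (d : nat).
Local Notation V := 'rV[R]_d.

Definition convex_set (K : set V) : Prop :=
  forall x y, K x -> K y -> forall t : R, 0 <= t <= 1 -> K (t *: x + (1 - t) *: y).

Definition convex_body (K : set V) : Prop :=
  convex_set K /\ compact K /\ (interior K !=set0).

Definition proper_body (K : set V) : Prop := interior K 0.

Definition coord_sub (I : {set 'I_d}) : set V :=
  [set x | forall j, j \notin I -> x 0 j = 0].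

Definition proj_sub (I : {set 'I_d}) (x : V) : V :=
  \row_j (if j \in I then x 0 j else 0).

Definition locally_anti_blocking (K : set V) : Prop :=
  forall I : {set 'I_d}, K `&` coord_sub I = proj_sub I @` K.

Definition int_lattice : set V := [set z | forall j, z 0 j \is a Num.int].

Definition affine_subspace (k : nat) (U : set V) : Prop :=
  exists (p : V) (A : 'M[R]_(k, d)),
    \rank A = k /\ U = [set p + u *m A | u in [set: 'rV[R]_k]].

Definition mu_i (K : set V) (i : nat) : R :=
  inf [set mu : R | 0 <= mu /\
        forall U, affine_subspace (d - i) U ->
          exists k z, K k /\ int_lattice z /\ U (mu *: k + z)].

Definition cov_radius (E C G : set V) : R :=
  inf [set mu : R | 0 <= mu /\
        [set y | exists c g, C c /\ G g /\ y = mu *: c + g] = E].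

End Defs.

From Pilot Require Import Defs.
From HB Require Import structures.
From mathcomp Require Import all_boot all_order all_algebra.
From mathcomp Require Import all_classical all_reals all_analysis.
Import Order.TTheory GRing.Theory Num.Theory.
Import numFieldNormedType.Exports.
Set Implicit Arguments. Unset Strict Implicit. Unset Printing Implicit Defensive.
Local Open Scope classical_set_scope.
Local Open Scope ring_scope.

(* A (d - i)-dimensional affine subspace p + row(A) always meets an
   i-dimensional coordinate subspace L_J: choose an invertible maximal minor of
   A and solve for the coordinates it indexes.  Hence a factor mu that covers
   every such L_J by mu (K ∩ L_J) + (Z^d ∩ L_J) is admissible for mu_i.
   Conversely, if mu is admissible, apply it to the fibre of y ∈ L_I under the
   projection onto L_I: projecting the point mu k + z found there gives
   y = mu (proj k) + proj z, and proj k ∈ K ∩ L_I by local anti-blocking.  As K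
   is star-shaped about 0, the factors covering L_I form an up-ray starting at
   the covering radius, and the infimum of the intersection of these rays over
   |I| = i is the largest of the radii. *)

Section CoordinateSubspaces.
Variables (R : realType) (d : nat).
Implicit Types (I : {set 'I_d}) (x y : 'rV[R]_d).

Lemma coord_subD I x y : coord_sub I x -> coord_sub I y -> coord_sub I (x + y).
Proof. by move=> xI yI j jI; rewrite mxE xI ?yI ?addr0. Qed.

Lemma coord_subZ I a x : coord_sub I x -> coord_sub I (a *: x).
Proof. by move=> xI j jI; rewrite mxE xI ?mulr0. Qed.

Lemma coord_sub_proj I x : coord_sub I (proj_sub I x).
Proof. by move=> j jI; rewrite mxE (negbTE jI). Qed.

Lemma proj_sub_id I x : coord_sub I x -> proj_sub I x = x.
Proof. by move=> xI; apply/rowP => j; rewrite mxE; case: ifP => // /negbT /xI ->. Qed.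

Lemma proj_subD I x y : proj_sub I (x + y) = proj_sub I x + proj_sub I y.
Proof. by apply/rowP => j; rewrite !mxE; case: ifP; rewrite ?addr0. Qed.

Lemma proj_subZ I a x : proj_sub I (a *: x) = a *: proj_sub I x.
Proof. by apply/rowP => j; rewrite !mxE; case: ifP; rewrite ?mulr0. Qed.

Lemma int_lattice_proj I x : int_lattice x -> int_lattice (proj_sub I x).
Proof. by move=> xZ j; rewrite mxE; case: ifP => _; [exact: xZ | exact: rpred0]. Qed.

Lemma affine_subspace_meets_coord_sub k (U : set 'rV[R]_d) :
  affine_subspace k U ->
  exists2 J : {set 'I_d}, #|J| = (d - k)%N & U `&` coord_sub J !=set0.
Proof.
move=> [p [A [rkA ->]]].
have fA : row_full A^T by rewrite /row_full mxrank_tr rkA.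
pose f := fullrankfun fA; pose B := (rowsub f A^T)^T.
have Bu : B \in unitmx by rewrite unitmx_tr fullrowsub_unit.
pose u := - colsub f p *m invmx B.
exists (~: [set f x | x in 'I_k]).
  by rewrite cardsCs finset.setCK card_imset ?card_ord //; apply: fullrankfun_inj.
exists (p + u *m A); split; first by exists u.
move=> j; rewrite finset.in_setC negbK => /imsetP [x _ ->].
have /rowP /(_ x) : u *m B = - colsub f p by rewrite mulmxKV.
rewrite !mxE => uB; rewrite (_ : \sum_r u 0 r * A r (f x) = - p 0 (f x)) ?addrN // -uB.
by apply: eq_bigr => r _; rewrite !mxE.
Qed.

Lemma affine_subspace_in_fibre I y : exists2 U, affine_subspace #|~: I| U &
  U y /\ U `<=` [set u | proj_sub I u = proj_sub I y].
Proof.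
pose e := @enum_val _ (mem (~: I)).
pose A : 'M[R]_(#|~: I|, d) := \matrix_(r, j) (j == e r)%:R.
have AAt : A *m A^T = 1%:M.
  apply/matrixP => r s; rewrite !mxE (bigD1 (e r)) //= big1.
    by rewrite !mxE eqxx mul1r addr0 (inj_eq enum_val_inj) eq_sym.
  by move=> j /negPf; rewrite !mxE => ->; rewrite mul0r.
have rkA : \rank A = #|~: I|.
  apply/eqP; rewrite eqn_leq rank_leq_row /=.
  by have := mxrankM_maxl A A^T; rewrite AAt mxrank1.
have projA u : proj_sub I (u *m A) = 0.
  apply/rowP => j; rewrite !mxE; case: ifP => // jI.
  rewrite big1 // => r _; rewrite mxE.
  have : e r \in ~: I by apply: enum_valP.
  by rewrite finset.in_setC; case: eqP => [<-|_]; rewrite ?jI ?mulr0.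
exists [set y + u *m A | u in [set: 'rV[R]_#|~: I|]]; first by exists y, A.
split; first by exists 0 => //; rewrite mul0mx addr0.
by move=> _ [u _ <-]; rewrite /= proj_subD projA addr0.
Qed.

End CoordinateSubspaces.

Section CoveringFactors.
Variables (R : realType) (d : nat).
Local Notation V := 'rV[R]_d.
Implicit Types (I : {set 'I_d}) (C G : set V) (mu : R).

Definition covering_factor (E : set V) C G mu : Prop :=
  0 <= mu /\ [set y | exists c g, C c /\ G g /\ y = mu *: c + g] = E.

Definition star_shaped C := forall c t, C c -> 0 <= t <= 1 -> C (t *: c).

Lemma convex_star_shaped C : Defs.convex_set C -> C 0 -> star_shaped C.
Proof.
by move=> cvxC C0 c t Cc t01; have := cvxC c 0 Cc C0 t t01; rewrite scaler0 addr0.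
Qed.

Lemma star_shaped_coord_sub I C : star_shaped C -> star_shaped (C `&` coord_sub I).
Proof. by move=> sC c t [Cc cI] t01; split; [exact: sC | exact: coord_subZ]. Qed.

Lemma covering_factor_coord_sub I C G mu :
  C `<=` coord_sub I -> G `<=` coord_sub I -> 0 <= mu ->
  (forall y, coord_sub I y -> exists c g, C c /\ G g /\ y = mu *: c + g) ->
  covering_factor (coord_sub I) C G mu.
Proof.
move=> CI GI mu0 cover; split=> //; apply/seteqP.
split=> [_ [c [g [Cc [Gg ->]]]]|y /cover //].
by apply: coord_subD; [apply/coord_subZ/CI | exact: GI].
Qed.

Lemma covering_factor_le I C G mu mu' :
  star_shaped C -> C `<=` coord_sub I -> G `<=` coord_sub I ->
  covering_factor (coord_sub I) C G mu -> mu <= mu' ->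
  covering_factor (coord_sub I) C G mu'.
Proof.
move=> sC CI GI [mu0 cover] le_mu; apply: covering_factor_coord_sub => //.
  exact: le_trans le_mu.
move=> y; rewrite -cover => -[c [g [Cc [Gg ->]]]].
move: le_mu; rewrite le_eqVlt => /orP[/eqP <-|lt_mu]; first by exists c, g.
have mu'_gt0 : 0 < mu' by exact: le_lt_trans lt_mu.
exists ((mu / mu') *: c), g; split; last by rewrite scalerA mulrCA mulfV ?gt_eqF ?mulr1.
by apply: sC => //; rewrite divr_ge0 ?(ltW mu'_gt0) //= ler_pdivrMr // mul1r ltW.
Qed.

Lemma cov_radius_le_covering_factor E C G mu :
  covering_factor E C G mu -> cov_radius E C G <= mu.
Proof. by move=> cover; apply: ge_inf cover; exists 0 => ? []. Qed.

Lemma covering_factor_gt_cov_radius I C G mu :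
  star_shaped C -> C `<=` coord_sub I -> G `<=` coord_sub I ->
  covering_factor (coord_sub I) C G !=set0 ->
  cov_radius (coord_sub I) C G < mu -> covering_factor (coord_sub I) C G mu.
Proof.
move=> sC CI GI ne lt_mu; have [mu0 cover lt_mu0] := inf_lt ne lt_mu.
exact: covering_factor_le cover (ltW lt_mu0).
Qed.

(* Rounding down coordinatewise leaves a remainder of sup-norm < 1, which the
   factor [e / 2] shrinks into the ball. *)
Lemma covering_factor_ball I C e : 0 < e -> ball (0 : V) e `<=` C ->
  covering_factor (coord_sub I)
    (C `&` coord_sub I) (@int_lattice R d `&` coord_sub I) (2 / e).
Proof.
move=> e_gt0 eC; have mu_gt0 : 0 < 2 / e by rewrite divr_gt0.
apply: covering_factor_coord_sub; [by move=> ? [] | by move=> ? [] | exact: ltW |].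
move=> y yI; pose g : V := \row_j (Num.floor (y 0 j))%:~R.
have gI : coord_sub I g by move=> j jI; rewrite mxE yI // floor0.
exists ((2 / e)^-1 *: (y - g)), g; split; last split.
- split; last by apply/coord_subZ/coord_subD => // j jI; rewrite mxE gI ?oppr0.
  apply: eC; rewrite -ball_normE /ball_ /= sub0r normrN normrZ invf_div.
  have : `|y - g| <= 1.
    rewrite [X in X <= _]mx_normrE; apply: bigmax_le => // -[a b] _ /=.
    rewrite !mxE ord1; have /andP [fl_le lt_fl] := floor_itv (y 0 b).
    by rewrite ger0_norm ?subr_ge0 // lerBlDl ltW // -[1]/(1%:~R) -intrD.
  move=> le_1; rewrite ger0_norm ?divr_ge0 ?ltW //.
  apply: (le_lt_trans (ler_wpM2l _ le_1)); first by rewrite divr_ge0 ?ltW.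
  by rewrite mulr1 ltr_pdivrMr // ltr_pMr // ltr1n.
- by split=> // j; rewrite mxE intr_int.
- by rewrite scalerA mulfV ?gt_eqF // scale1r subrK.
Qed.

End CoveringFactors.

Section CoordinateCoverings.
Variables (R : realType) (d : nat) (K : set 'rV[R]_d).

Definition hitting_factor (k : nat) (mu : R) : Prop :=
  0 <= mu /\ forall U, affine_subspace k U ->
    exists c z, K c /\ int_lattice z /\ U (mu *: c + z).

Local Notation covers I :=
  (covering_factor (coord_sub I) (K `&` coord_sub I) (@int_lattice R d `&` coord_sub I)).

Lemma hitting_factor_of_covering i (mu : R) : (i <= d)%N -> 0 <= mu ->
  (forall J : {set 'I_d}, #|J| = i -> covers J mu) -> hitting_factor (d - i) mu.
Proof.
move=> le_id mu0 cover; split=> // U /affine_subspace_meets_coord_sub [J cardJ [q [Uq qJ]]].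
have /cover [_ covJ] : #|J| = i by rewrite cardJ subKn.
by move: qJ; rewrite -covJ => -[c [g [[Kc _] [[Zg _] qE]]]]; exists c, g; rewrite -qE.
Qed.

Lemma covering_factor_of_hitting (I : {set 'I_d}) (mu : R) :
  locally_anti_blocking K -> hitting_factor #|~: I| mu -> covers I mu.
Proof.
move=> labK [mu0 hit]; apply: covering_factor_coord_sub => //.
move=> y yI; have [U affU [Uy U_fibre]] := affine_subspace_in_fibre I y.
have [c [z [Kc [Zz /U_fibre /= proj_eq]]]] := hit U affU.
have KIc : (K `&` coord_sub I) (proj_sub I c) by rewrite labK; exists c.
exists (proj_sub I c), (proj_sub I z); split=> //.
split; first by split; [exact: int_lattice_proj | exact: coord_sub_proj].
by rewrite -proj_subZ -proj_subD proj_eq proj_sub_id.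
Qed.

Lemma hitting_factorP i (mu : R) : (i <= d)%N -> locally_anti_blocking K ->
  hitting_factor (d - i) mu <-> 0 <= mu /\ forall J : {set 'I_d}, #|J| = i -> covers J mu.
Proof.
move=> le_id labK; split=> [hit|[mu0 /(hitting_factor_of_covering le_id mu0)] //].
split=> [|J cardJ]; first by case: hit.
apply: covering_factor_of_hitting => //.
by rewrite cardsCs finset.setCK card_ord cardJ.
Qed.

End CoordinateCoverings.

Theorem corollary3p3 (R : realType) (d : nat) (K : set 'rV[R]_d) (i : nat) :
  convex_body K -> proper_body K -> locally_anti_blocking K ->
  (1 <= i <= d)%N ->
  mu_i K i =
  \big[Num.max/0]_(I : {set 'I_d} | #|I| == i)
     cov_radius (coord_sub I) (K `&` coord_sub I) (@int_lattice R d `&` coord_sub I).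
Proof.
move=> [cvxK _] /nbhs_ballP [e e_gt0 eK] labK /andP [_ le_id].
have sK I : star_shaped (K `&` coord_sub I).
  by apply: star_shaped_coord_sub; apply: convex_star_shaped cvxK _; apply: eK; apply: ballxx.
set m := \big[Num.max/0]_(I | _) _.
have m0 : 0 <= m by apply: bigmax_ge_id.
have hit_gt_m mu : m < mu -> hitting_factor K (d - i) mu.
  move=> lt_mu; apply/hitting_factorP => //.
  split=> [|J cardJ]; first exact: le_trans m0 (ltW lt_mu).
  apply: covering_factor_gt_cov_radius (sK J) _ _ _ _; [by move=> ? [] | by move=> ? [] | |].
    by exists (2 / e); apply: covering_factor_ball eK.
  by apply: le_lt_trans lt_mu; apply: le_bigmax_cond; apply/eqP.
have hit_ne : hitting_factor K (d - i) !=set0.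
  by exists (m + 1); apply: hit_gt_m; rewrite ltrDl.
change (inf (hitting_factor K (d - i)) = m); apply/eqP; rewrite eq_le; apply/andP; split.
  apply/ler_addgt0Pr => delta delta_gt0; apply: ge_inf; first by exists 0 => ? [].
  by apply: hit_gt_m; rewrite ltrDl.
apply: bigmax_le => [|I /eqP cardI]; apply: (lb_le_inf hit_ne) => mu hit_mu.
  by case: hit_mu.
apply: cov_radius_le_covering_factor.
by case/(hitting_factorP _ le_id labK): hit_mu => _; apply.
Qed.
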